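(* Let $\mathbb{E}_{a,b,c}=\{(x,y,z): x^2/a^2+y^2/b^2+z^2/c^2=1\}$ be an ellipsoid with $a>b>c>0$. Then $\mathbb{E}_{a,b,c}$ has exactly four umbilic points, located in the plane $y=0$ (the plane of symmetry orthogonal to the middle axis), and each of them is of type $G_1$ for the geometric mean curvature lines and of type $D_1$ for the principal curvature lines.
   Context: An umbilic point is a point where the principal curvatures coincide. At an umbilic point choose a Monge chart $(x,y)\mapsto(x,y,h(x,y))$ centered at it with $h=\frac{k}{2}(x^2+y^2)+\frac{a}{6}x^3+\frac{b}{2}xy^2+\frac{c}{6}y^3+O(4)$ (here $a,b,c,k$ are the local coefficients, not the ellipsoid's axes). The point is of type $G_1$ if $kb(b-a)\neq0$ and $\Delta_G=4c^2(2a-b)^2-[3c^2+(a-5b)^2][3(a-5b)(a-b)+c^2]>0$. It is of type $D_1$ if $b(b-a)\neq0$ and $\Delta_P=4b(a-2b)^3-c^2(a-2b)^2>0$. Geometric mean curvature lines are curves with normal curvature equal to $\sqrt{\mathcal{K}}$, $\mathcal{K}$ the Gaussian curvature. *)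

From Stdlib Require Import Reals Lra List.
Open Scope R_scope.

Definition V3 : Type := (R * R * R)%type.
Definition vx (p : V3) : R := fst (fst p).
Definition vy (p : V3) : R := snd (fst p).
Definition vz (p : V3) : R := snd p.
Definition mkV (x y z : R) : V3 := (x, y, z).
Definition vadd (u v : V3) : V3 := mkV (vx u + vx v) (vy u + vy v) (vz u + vz v).
Definition vscale (t : R) (v : V3) : V3 := mkV (t * vx v) (t * vy v) (t * vz v).
Definition dot (u v : V3) : R := vx u * vx v + vy u * vy v + vz u * vz v.
Definition vnorm (v : V3) : R := sqrt (dot v v).

Definition ellF (A B C : R) (p : V3) : R :=
  vx p ^ 2 / A ^ 2 + vy p ^ 2 / B ^ 2 + vz p ^ 2 / C ^ 2.
Definition on_ellipsoid (A B C : R) (p : V3) : Prop := ellF A B C p = 1.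

Definition gradF (A B C : R) (p : V3) : V3 :=
  mkV (2 * vx p / A ^ 2) (2 * vy p / B ^ 2) (2 * vz p / C ^ 2).
Definition hessF (A B C : R) (v : V3) : R :=
  2 * (vx v ^ 2 / A ^ 2 + vy v ^ 2 / B ^ 2 + vz v ^ 2 / C ^ 2).

(** Normal curvature of the level surface {F = 1} at p in the tangent
    direction v (unit normal N = grad F / |grad F|):
      k_n(v) = - <D^2F(p) v, v> / (|grad F(p)| |v|^2). *)
Definition normal_curvature (A B C : R) (p v : V3) : R :=
  - hessF A B C v / (vnorm (gradF A B C p) * dot v v).

(** Umbilic point: the principal curvatures (extremal values of the normal
    curvature over tangent directions) coincide, i.e. the normal curvature
    is the same in every tangent direction. *)
Definition umbilic (A B C : R) (p : V3) : Prop :=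
  on_ellipsoid A B C p /\
  exists kappa : R, forall v : V3, v <> mkV 0 0 0 ->
    dot v (gradF A B C p) = 0 -> normal_curvature A B C p v = kappa.

Definition orthonormal3 (e1 e2 n : V3) : Prop :=
  dot e1 e1 = 1 /\ dot e2 e2 = 1 /\ dot n n = 1 /\
  dot e1 e2 = 0 /\ dot e1 n = 0 /\ dot e2 n = 0.

(** Monge chart of the ellipsoid centered at p: in an orthonormal frame
    (e1, e2, n) at p, the surface near p is the graph
    (x,y) |-> p + x e1 + y e2 + h(x,y) n, with
    h = k/2 (x^2+y^2) + a/6 x^3 + b/2 x y^2 + c/6 y^3 + O(4). *)
Definition monge_chart (A B C : R) (p : V3) (k a b c : R) : Prop :=
  exists e1 e2 n : V3, orthonormal3 e1 e2 n /\
  exists (h : R -> R -> R) (delta : R), 0 < delta /\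
    (forall x y, Rabs x < delta -> Rabs y < delta ->
       Rabs (h x y) < delta /\
       on_ellipsoid A B C
         (vadd p (vadd (vscale x e1) (vadd (vscale y e2) (vscale (h x y) n))))) /\
    (forall x y t, Rabs x < delta -> Rabs y < delta -> Rabs t < delta ->
       on_ellipsoid A B C
         (vadd p (vadd (vscale x e1) (vadd (vscale y e2) (vscale t n)))) ->
       t = h x y) /\
    exists K : R, forall x y, Rabs x < delta -> Rabs y < delta ->
      Rabs (h x y - (k / 2 * (x ^ 2 + y ^ 2) + a / 6 * x ^ 3
                     + b / 2 * x * y ^ 2 + c / 6 * y ^ 3))
        <= K * (x ^ 2 + y ^ 2) ^ 2.

Definition DeltaG (a b c : R) : R :=
  4 * c ^ 2 * (2 * a - b) ^ 2
  - (3 * c ^ 2 + (a - 5 * b) ^ 2) * (3 * (a - 5 * b) * (a - b) + c ^ 2).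

Definition DeltaP (a b c : R) : R :=
  4 * b * (a - 2 * b) ^ 3 - c ^ 2 * (a - 2 * b) ^ 2.

Definition type_G1 (A B C : R) (p : V3) : Prop :=
  exists k a b c : R, monge_chart A B C p k a b c /\
    k * b * (b - a) <> 0 /\ DeltaG a b c > 0.

Definition type_D1 (A B C : R) (p : V3) : Prop :=
  exists k a b c : R, monge_chart A B C p k a b c /\
    b * (b - a) <> 0 /\ DeltaP a b c > 0.

From Stdlib Require Import Reals List Lra Classical.
Open Scope R_scope.

(* The normal curvature of {F = 1} in a tangent direction v is -2/|grad F|
   times v1^2/a^2 + v2^2/b^2 + v3^2/c^2 over |v|^2, so p is umbilic iff this
   diagonal form is a scalar multiple of the metric on the plane orthogonal to
   grad F(p).  As its entries are distinct, that forces the normal into the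
   plane y = 0 plus one quadratic relation, which together with the ellipsoid
   equation fixes x^2 and z^2: four points.
   At such a point, in the orthonormal frame (e1, e_y, n) with e1 in the
   xz-plane, the ellipsoid equation is a quadratic in the height t,
   al t^2 + (2G + 2Px) t + (x^2 + y^2)/b^2 = 0, the umbilic relation being what
   makes the coefficients of x^2 and y^2 agree.  Its small root is the Monge
   function, with k = -1/(b^2 G) and cubic coefficients (3 beta, beta, 0) where
   beta = P/(b^2 G^2) <> 0; hence Delta_G = 48 beta^4 and Delta_P = 4 beta^4. *)

Ltac coords := cbv [dot vx vy vz mkV fst snd] in *.

Lemma pow2_gt_0 (x : R) : x <> 0 -> 0 < x ^ 2.
Proof. intro Hx; rewrite <- Rsqr_pow2; exact (Rsqr_pos_lt x Hx). Qed.

Lemma Rdiv_neq_0 (x y : R) : x <> 0 -> y <> 0 -> x / y <> 0.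
Proof.
  intros Hx Hy; exact (Rmult_integral_contrapositive_currified _ _ Hx (Rinv_neq_0_compat _ Hy)).
Qed.

Lemma Rinv_pow2_lt (x y : R) : 0 < x -> x < y -> / y ^ 2 < / x ^ 2.
Proof. intros Hx Hxy; apply Rinv_lt_contravar; [apply Rmult_lt_0_compat|]; nra. Qed.

Lemma dot_self_pos (v : V3) : v <> mkV 0 0 0 -> 0 < dot v v.
Proof.
  destruct v as [[v1 v2] v3]; intro Hv; coords.
  apply Rnot_le_lt; intro Hle; apply Hv.
  pose proof (Rle_0_sqr v1); pose proof (Rle_0_sqr v2); pose proof (Rle_0_sqr v3).
  unfold Rsqr in *.
  assert (v1 * v1 = 0) by lra. assert (v2 * v2 = 0) by lra. assert (v3 * v3 = 0) by lra.
  repeat match goal with H : ?x * ?x = 0 |- _ =>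
    apply Rmult_integral in H; destruct H as [-> | ->] end; reflexivity.
Qed.

Definition diag_form (m1 m2 m3 : R) (v : V3) : R :=
  m1 * vx v ^ 2 + m2 * vy v ^ 2 + m3 * vz v ^ 2.

Definition scalar_on_plane (q : V3 -> R) (g : V3) : Prop :=
  exists kappa : R, forall v : V3, v <> mkV 0 0 0 -> dot v g = 0 ->
    q v = kappa * dot v v.

Section DiagonalForm.

Variables m1 m2 m3 : R.
Hypotheses (H12 : m1 < m2) (H23 : m2 < m3).

Lemma scalar_on_plane_diag (g : V3) : g <> mkV 0 0 0 ->
  scalar_on_plane (diag_form m1 m2 m3) g <->
  vy g = 0 /\ (m2 - m1) * vz g ^ 2 = (m3 - m2) * vx g ^ 2.
Proof.
  destruct g as [[g1 g2] g3]; intro Hg; coords.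
  split.
  - intros [kappa Hk].
    assert (Htest : forall v1 v2 v3, v1 * g1 + v2 * g2 + v3 * g3 = 0 ->
              m1 * v1 ^ 2 + m2 * v2 ^ 2 + m3 * v3 ^ 2
              = kappa * (v1 * v1 + v2 * v2 + v3 * v3)).
    { intros v1 v2 v3 Hv.
      destruct (classic (mkV v1 v2 v3 = mkV 0 0 0)) as [E | E].
      - injection E as -> -> ->; ring.
      - exact (Hk _ E Hv). }
    pose proof (Htest 0 g3 (- g2) ltac:(ring)) as E1.
    pose proof (Htest g3 0 (- g1) ltac:(ring)) as E2.
    pose proof (Htest g2 (- g1) 0 ltac:(ring)) as E3.
    (* E1 and E3 bound kappa from both sides of m2 unless g2 = 0 *)
    assert (Hg2 : g2 = 0).
    { destruct (Req_dec g2 0) as [|Hg2]; [assumption | exfalso].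
      pose proof (pow2_gt_0 g2 Hg2).
      destruct (Rle_or_lt kappa m2); nra. }
    subst g2.
    assert (Hk2 : kappa = m2).
    { destruct (Req_dec g1 0) as [-> | Hg1].
      - assert (Hg3 : g3 <> 0) by (intros ->; apply Hg; reflexivity).
        pose proof (pow2_gt_0 g3 Hg3). nra.
      - pose proof (pow2_gt_0 g1 Hg1). nra. }
    subst kappa. split; [reflexivity | nra].
  - intros [-> Hrel].
    assert (Hg1 : g1 <> 0).
    { intros ->. apply Hg. destruct (Req_dec g3 0) as [-> | Hg3]; [reflexivity | exfalso].
      pose proof (pow2_gt_0 g3 Hg3). nra. }
    exists m2. intros [[v1 v2] v3] _ Hv; unfold diag_form; coords.
    assert (Hv1 : v1 * g1 = - (v3 * g3)) by lra.
    apply (Rmult_eq_reg_l (g1 ^ 2)); [| apply pow_nonzero; exact Hg1].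
    replace (g1 ^ 2 * (m1 * v1 ^ 2 + m2 * v2 ^ 2 + m3 * v3 ^ 2))
      with ((m1 - m2) * (v1 * g1) ^ 2 + (m3 - m2) * g1 ^ 2 * v3 ^ 2
            + g1 ^ 2 * (m2 * (v1 * v1 + v2 * v2 + v3 * v3))) by ring.
    rewrite Hv1, <- Hrel. ring.
Qed.

End DiagonalForm.

(* The root of smallest modulus of al t^2 + beta t + gam, written in the
   rationalised form that stays meaningful when al = 0. *)
Definition small_root (al beta gam : R) : R :=
  - (2 * gam) / (beta + sqrt (beta ^ 2 - 4 * al * gam)).

Lemma small_root_spec (al beta gam : R) :
  0 <= al -> 0 < beta -> 0 <= gam -> 4 * al * gam <= beta ^ 2 ->
  al * small_root al beta gam ^ 2 + beta * small_root al beta gam + gam = 0 /\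
  beta * Rabs (small_root al beta gam) <= 2 * gam.
Proof.
  intros Hal Hbeta Hgam Hdisc. unfold small_root.
  set (S := sqrt (beta ^ 2 - 4 * al * gam)).
  assert (HS : 0 <= S) by apply sqrt_pos.
  assert (HSS : S * S = beta ^ 2 - 4 * al * gam) by (apply sqrt_sqrt; lra).
  set (h := - (2 * gam) / (beta + S)).
  assert (Hh : h * (beta + S) = - (2 * gam)) by (unfold h; field; lra).
  assert (Hh0 : h <= 0) by nra.
  split.
  - apply (Rmult_eq_reg_r ((beta + S) ^ 2)); [| apply pow_nonzero; lra].
    replace ((al * h ^ 2 + beta * h + gam) * (beta + S) ^ 2)
      with (al * (h * (beta + S)) ^ 2 + beta * (h * (beta + S)) * (beta + S)
            + gam * (beta + S) ^ 2) by ring.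
    rewrite Hh. nra.
  - rewrite Rabs_left1 by exact Hh0. nra.
Qed.

Lemma quadratic_root_unique (al beta gam d t s : R) :
  0 <= al -> 2 * al * d < beta -> Rabs t < d -> Rabs s < d ->
  al * t ^ 2 + beta * t + gam = 0 -> al * s ^ 2 + beta * s + gam = 0 -> t = s.
Proof.
  intros Hal Hd Ht Hs Et Es.
  apply Rabs_def2 in Ht; apply Rabs_def2 in Hs.
  assert (Hfac : (t - s) * (al * (t + s) + beta) = 0) by nra.
  apply Rmult_integral in Hfac as [Hfac | Hfac]; [lra | nra].
Qed.

Section QuadraticGraph.

Variables al G P L : R.
Hypotheses (Hal : 0 <= al) (HG : 0 < G) (HL : 0 < L).

Definition quad_graph (x y : R) : R :=
  small_root al (2 * G + 2 * P * x) (L * (x ^ 2 + y ^ 2)).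

Definition graph_radius : R := G / (8 * (1 + Rabs P + al + L)).

Lemma graph_radius_bounds :
  0 < graph_radius /\ Rabs P * graph_radius <= G / 8 /\
  al * graph_radius <= G / 8 /\ L * graph_radius <= G / 8.
Proof.
  unfold graph_radius. pose proof (Rabs_pos P).
  set (M := 1 + Rabs P + al + L).
  assert (HM : 1 <= M) by (unfold M; lra).
  assert (HdM : G / (8 * M) * M = G / 8) by (field; lra).
  assert (0 < G / (8 * M)) by (apply Rdiv_lt_0_compat; lra).
  unfold M in HdM |- *. repeat split; nra.
Qed.

Lemma quad_graph_spec (x y : R) :
  Rabs x < graph_radius -> Rabs y < graph_radius ->
  G <= 2 * G + 2 * P * x /\
  al * quad_graph x y ^ 2 + (2 * G + 2 * P * x) * quad_graph x y
    + L * (x ^ 2 + y ^ 2) = 0 /\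
  G * Rabs (quad_graph x y) <= 2 * L * (x ^ 2 + y ^ 2) /\
  Rabs (quad_graph x y) < graph_radius.
Proof.
  intros Hx Hy. destruct graph_radius_bounds as (Hd & HPd & Hald & HLd).
  set (d := graph_radius) in *.
  assert (HPx : Rabs (P * x) <= Rabs P * d)
    by (rewrite Rabs_mult; apply Rmult_le_compat_l; [apply Rabs_pos | lra]).
  apply Rabs_def2 in Hx; apply Rabs_def2 in Hy.
  assert (Hbeta : G <= 2 * G + 2 * P * x)
    by (pose proof (Rle_abs (- (P * x))); rewrite Rabs_Ropp in *; lra).
  assert (Hr : x ^ 2 + y ^ 2 <= 2 * d ^ 2) by nra.
  assert (Hgam : 0 <= L * (x ^ 2 + y ^ 2)) by nra.
  assert (Hdisc : 4 * al * (L * (x ^ 2 + y ^ 2)) <= (2 * G + 2 * P * x) ^ 2).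
  { assert (al * (L * (x ^ 2 + y ^ 2)) <= al * (2 * L * d ^ 2))
      by (apply Rmult_le_compat_l; nra).
    assert (al * d * (L * d) <= G / 8 * (G / 8)) by (apply Rmult_le_compat; nra).
    nra. }
  destruct (small_root_spec al (2 * G + 2 * P * x) (L * (x ^ 2 + y ^ 2)))
    as [Hroot Hsmall]; [exact Hal | lra | exact Hgam | exact Hdisc |].
  fold (quad_graph x y) in Hroot, Hsmall.
  pose proof (Rabs_pos (quad_graph x y)).
  assert (HGh : G * Rabs (quad_graph x y) <= 2 * L * (x ^ 2 + y ^ 2)) by nra.
  repeat split; [exact Hbeta | exact Hroot | exact HGh | nra].
Qed.

Lemma quad_graph_jet (x y : R) :
  Rabs x < graph_radius -> Rabs y < graph_radius ->
  Rabs (quad_graph x y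
        - (- (L / G) / 2 * (x ^ 2 + y ^ 2) + 3 * (L * P / G ^ 2) / 6 * x ^ 3
           + L * P / G ^ 2 / 2 * x * y ^ 2 + 0 / 6 * y ^ 3))
  <= (4 * al * L ^ 2 + L * P ^ 2) / G ^ 3 * (x ^ 2 + y ^ 2) ^ 2.
Proof.
  intros Hx Hy. destruct (quad_graph_spec x y Hx Hy) as (Hbeta & Hroot & Hsmall & _).
  set (h := quad_graph x y) in *. set (r := x ^ 2 + y ^ 2) in *.
  set (beta := 2 * G + 2 * P * x) in *.
  set (T := - (L / G) / 2 * r + 3 * (L * P / G ^ 2) / 6 * x ^ 3
            + L * P / G ^ 2 / 2 * x * y ^ 2 + 0 / 6 * y ^ 3).
  assert (Hx2 : 0 <= x ^ 2 <= r) by (unfold r; nra).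
  (* the cubic jet T solves the quadratic up to a quartic defect *)
  assert (HT : beta * T = - (L * r) + L * P ^ 2 * x ^ 2 * r / G ^ 2)
    by (unfold beta, T, r; field; lra).
  assert (Hdefect : G ^ 2 * (beta * (T - h))
                    = G ^ 2 * (al * h ^ 2) + L * P ^ 2 * x ^ 2 * r).
  { replace (beta * (T - h)) with (beta * T - beta * h) by ring.
    rewrite HT. replace (beta * h) with (- (al * h ^ 2) - L * r) by lra.
    field. lra. }
  assert (Hh2 : G ^ 2 * h ^ 2 <= 4 * L ^ 2 * r ^ 2).
  { rewrite <- (pow2_abs h).
    assert (0 <= G * Rabs h) by (pose proof (Rabs_pos h); nra).
    assert (G * Rabs h * (G * Rabs h) <= 2 * L * r * (2 * L * r))
      by (apply Rmult_le_compat; lra).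
    nra. }
  assert (HPx : 0 <= L * P ^ 2 * x ^ 2 * r <= L * P ^ 2 * r * r).
  { pose proof (pow2_ge_0 P). split.
    - apply Rmult_le_pos; [apply Rmult_le_pos|]; nra.
    - apply Rmult_le_compat_r; [|apply Rmult_le_compat_l]; nra. }
  assert (Hah : 0 <= G ^ 2 * (al * h ^ 2) <= al * (4 * L ^ 2 * r ^ 2))
    by (pose proof (pow2_ge_0 h); pose proof (pow2_ge_0 G); split; nra).
  assert (HTh : 0 <= T - h).
  { assert (0 < G ^ 2 * beta) by (apply Rmult_lt_0_compat; [apply pow_lt|]; lra).
    nra. }
  rewrite Rabs_minus_sym, Rabs_right by lra.
  apply (Rmult_le_reg_l (G ^ 3)); [apply pow_lt; exact HG|].
  replace (G ^ 3 * ((4 * al * L ^ 2 + L * P ^ 2) / G ^ 3 * r ^ 2))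
    with ((4 * al * L ^ 2 + L * P ^ 2) * r ^ 2) by (field; lra).
  assert (G ^ 2 * (G * (T - h)) <= G ^ 2 * (beta * (T - h)))
    by (apply Rmult_le_compat_l; [apply pow2_ge_0 | apply Rmult_le_compat_r; lra]).
  replace (G ^ 3 * (T - h)) with (G ^ 2 * (G * (T - h))) by ring.
  nra.
Qed.

Lemma monge_chart_of_quadratic (A B C : R) (p e1 e2 n : V3) :
  orthonormal3 e1 e2 n ->
  (forall x y t,
     ellF A B C (vadd p (vadd (vscale x e1) (vadd (vscale y e2) (vscale t n)))) - 1
     = al * t ^ 2 + (2 * G + 2 * P * x) * t + L * (x ^ 2 + y ^ 2)) ->
  monge_chart A B C p (- (L / G)) (3 * (L * P / G ^ 2)) (L * P / G ^ 2) 0.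
Proof.
  intros Hframe Hexp. exists e1, e2, n. split; [exact Hframe|].
  exists quad_graph, graph_radius.
  destruct graph_radius_bounds as (Hd & _ & Hald & _).
  split; [exact Hd|]. split; [|split].
  - intros x y Hx Hy. destruct (quad_graph_spec x y Hx Hy) as (_ & Hroot & _ & Hh).
    split; [exact Hh|].
    unfold on_ellipsoid. pose proof (Hexp x y (quad_graph x y)). lra.
  - intros x y t Hx Hy Ht Hon. unfold on_ellipsoid in Hon.
    destruct (quad_graph_spec x y Hx Hy) as (Hbeta & Hroot & _ & Hh).
    apply (quadratic_root_unique al (2 * G + 2 * P * x) (L * (x ^ 2 + y ^ 2))
             graph_radius); try assumption.
    + lra.
    + pose proof (Hexp x y t). lra.
  - exists ((4 * al * L ^ 2 + L * P ^ 2) / G ^ 3). exact quad_graph_jet.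
Qed.

End QuadraticGraph.

Lemma types_of_monge_chart (A B C : R) (p : V3) (k b : R) :
  k <> 0 -> b <> 0 -> monge_chart A B C p k (3 * b) b 0 ->
  type_G1 A B C p /\ type_D1 A B C p.
Proof.
  intros Hk Hb Hchart. pose proof (pow2_gt_0 b Hb).
  split; exists k, (3 * b), b, 0; (split; [exact Hchart|]); unfold DeltaG, DeltaP.
  - split.
    + replace (k * b * (b - 3 * b)) with (- 2 * k * b ^ 2) by ring.
      apply Rmult_integral_contrapositive_currified; [|lra].
      apply Rmult_integral_contrapositive_currified; lra.
    + ring_simplify. nra.
  - split.
    + replace (b * (b - 3 * b)) with (- 2 * b ^ 2) by ring. lra.
    + ring_simplify. nra.
Qed.

Lemma hessF_diag (A B C : R) (v : V3) :
  hessF A B C v = 2 * diag_form (/ A ^ 2) (/ B ^ 2) (/ C ^ 2) v.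
Proof. unfold hessF, diag_form, Rdiv; ring. Qed.

Lemma dot_gradF (A B C : R) (p : V3) : dot p (gradF A B C p) = 2 * ellF A B C p.
Proof. unfold gradF, ellF; coords; unfold Rdiv; ring. Qed.

Lemma gradF_neq0 (A B C : R) (p : V3) :
  on_ellipsoid A B C p -> gradF A B C p <> mkV 0 0 0.
Proof.
  intros Hon E. pose proof (dot_gradF A B C p) as Euler.
  unfold on_ellipsoid in Hon. rewrite E, Hon in Euler. coords. lra.
Qed.

Lemma umbilic_iff_scalar_on_plane (A B C : R) (p : V3) :
  umbilic A B C p <->
  on_ellipsoid A B C p /\
  scalar_on_plane (diag_form (/ A ^ 2) (/ B ^ 2) (/ C ^ 2)) (gradF A B C p).
Proof.
  unfold umbilic, scalar_on_plane, normal_curvature.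
  split; intros [Hon [kappa Hk]]; split; try exact Hon.
  all: assert (HN : 0 < vnorm (gradF A B C p))
         by (apply sqrt_lt_R0, dot_self_pos, gradF_neq0, Hon).
  - exists (- kappa * vnorm (gradF A B C p) / 2). intros v Hv Ht.
    pose proof (dot_self_pos v Hv). specialize (Hk v Hv Ht).
    rewrite hessF_diag in Hk. rewrite <- Hk. field. lra.
  - exists (- 2 * kappa / vnorm (gradF A B C p)). intros v Hv Ht.
    pose proof (dot_self_pos v Hv).
    rewrite hessF_diag, (Hk v Hv Ht). field. lra.
Qed.

Lemma ellF_adapted_frame (A B C X Z u1 u3 G x y t : R) :
  X ^ 2 / A ^ 2 + Z ^ 2 / C ^ 2 = 1 ->
  X / A ^ 2 * u3 - Z / C ^ 2 * u1 = 0 ->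
  X / A ^ 2 * u1 + Z / C ^ 2 * u3 = G ->
  u3 ^ 2 / A ^ 2 + u1 ^ 2 / C ^ 2 = / B ^ 2 ->
  ellF A B C (vadd (mkV X 0 Z) (vadd (vscale x (mkV u3 0 (- u1)))
     (vadd (vscale y (mkV 0 1 0)) (vscale t (mkV u1 0 u3))))) - 1
  = (u1 ^ 2 / A ^ 2 + u3 ^ 2 / C ^ 2) * t ^ 2
    + (2 * G + 2 * (u1 * u3 * (/ A ^ 2 - / C ^ 2)) * x) * t + / B ^ 2 * (x ^ 2 + y ^ 2).
Proof.
  intros Hon Hpar Hnorm Hcurv.
  unfold ellF, vadd, vscale; coords.
  transitivity ((X ^ 2 / A ^ 2 + Z ^ 2 / C ^ 2 - 1)
                + 2 * x * (X / A ^ 2 * u3 - Z / C ^ 2 * u1)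
                + 2 * t * (X / A ^ 2 * u1 + Z / C ^ 2 * u3)
                + x ^ 2 * (u3 ^ 2 / A ^ 2 + u1 ^ 2 / C ^ 2)
                + 2 * x * t * (u1 * u3 * (/ A ^ 2 - / C ^ 2))
                + t ^ 2 * (u1 ^ 2 / A ^ 2 + u3 ^ 2 / C ^ 2) + y ^ 2 / B ^ 2).
  - unfold Rdiv; ring.
  - rewrite Hon, Hpar, Hnorm, Hcurv. unfold Rdiv; ring.
Qed.

Definition umbilic_x2 (A B C : R) : R := A ^ 2 * (A ^ 2 - B ^ 2) / (A ^ 2 - C ^ 2).
Definition umbilic_z2 (A B C : R) : R := C ^ 2 * (B ^ 2 - C ^ 2) / (A ^ 2 - C ^ 2).

Section Ellipsoid.

Variables A B C : R.
Hypotheses (HAB : A > B) (HBC : B > C) (HC : C > 0).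

Lemma umbilic_x2_pos : 0 < umbilic_x2 A B C.
Proof. unfold umbilic_x2; apply Rdiv_lt_0_compat; [apply Rmult_lt_0_compat|]; nra. Qed.

Lemma umbilic_z2_pos : 0 < umbilic_z2 A B C.
Proof. unfold umbilic_z2; apply Rdiv_lt_0_compat; [apply Rmult_lt_0_compat|]; nra. Qed.

Lemma umbilic_coords_iff (X Z : R) :
  X ^ 2 / A ^ 2 + Z ^ 2 / C ^ 2 = 1 /\
  (/ B ^ 2 - / A ^ 2) * (2 * Z / C ^ 2) ^ 2 = (/ C ^ 2 - / B ^ 2) * (2 * X / A ^ 2) ^ 2
  <-> X ^ 2 = umbilic_x2 A B C /\ Z ^ 2 = umbilic_z2 A B C.
Proof.
  assert (HAC : A ^ 2 - C ^ 2 <> 0) by nra.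
  assert (HA : A <> 0) by lra. assert (HB : B <> 0) by lra. assert (HC0 : C <> 0) by lra.
  split.
  - intros [Hon Hrel].
    set (E1 := X ^ 2 / A ^ 2 + Z ^ 2 / C ^ 2 - 1).
    set (E2 := (/ B ^ 2 - / A ^ 2) * (2 * Z / C ^ 2) ^ 2
               - (/ C ^ 2 - / B ^ 2) * (2 * X / A ^ 2) ^ 2).
    assert (Hx : X ^ 2 - umbilic_x2 A B C
                 = umbilic_x2 A B C * E1 - A ^ 4 * B ^ 2 * C ^ 2 / (4 * (A ^ 2 - C ^ 2)) * E2)
      by (unfold E1, E2, umbilic_x2; field; tauto).
    assert (Hz : Z ^ 2 - umbilic_z2 A B C
                 = umbilic_z2 A B C * E1 + A ^ 2 * B ^ 2 * C ^ 4 / (4 * (A ^ 2 - C ^ 2)) * E2)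
      by (unfold E1, E2, umbilic_z2; field; tauto).
    assert (HE1 : E1 = 0) by (unfold E1; lra). assert (HE2 : E2 = 0) by (unfold E2; lra).
    rewrite HE1, HE2 in Hx, Hz. split; lra.
  - intros [HX HZ].
    split; [rewrite HX, HZ; unfold umbilic_x2, umbilic_z2; field; tauto|].
    replace ((2 * Z / C ^ 2) ^ 2) with (4 * Z ^ 2 / C ^ 4) by (field; tauto).
    replace ((2 * X / A ^ 2) ^ 2) with (4 * X ^ 2 / A ^ 4) by (field; tauto).
    rewrite HX, HZ; unfold umbilic_x2, umbilic_z2; field; tauto.
Qed.

Lemma umbilic_iff (p : V3) :
  umbilic A B C p <->
  vy p = 0 /\ vx p ^ 2 = umbilic_x2 A B C /\ vz p ^ 2 = umbilic_z2 A B C.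
Proof.
  assert (Hm12 : / A ^ 2 < / B ^ 2) by (apply Rinv_pow2_lt; lra).
  assert (Hm23 : / B ^ 2 < / C ^ 2) by (apply Rinv_pow2_lt; lra).
  rewrite umbilic_iff_scalar_on_plane.
  destruct p as [[X Y] Z]. split.
  - intros [Hon Hs].
    apply (scalar_on_plane_diag _ _ _ Hm12 Hm23 _ (gradF_neq0 _ _ _ _ Hon)) in Hs.
    unfold gradF, on_ellipsoid, ellF in *; coords. destruct Hs as [HY Hrel].
    assert (Y = 0).
    { replace Y with (2 * Y / B ^ 2 * (B ^ 2 / 2)) by (field; lra). rewrite HY; ring. }
    subst Y. split; [reflexivity|].
    apply umbilic_coords_iff. split; [|exact Hrel].
    replace (0 ^ 2 / B ^ 2) with 0 in Hon by (unfold Rdiv; ring). lra.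
  - intros (HY & HX & HZ); coords. subst Y.
    destruct (proj2 (umbilic_coords_iff X Z) (conj HX HZ)) as [Hs Hrel].
    assert (Hon : on_ellipsoid A B C (X, 0, Z)).
    { unfold on_ellipsoid, ellF; coords. rewrite <- Hs. unfold Rdiv; ring. }
    split; [exact Hon|].
    apply (scalar_on_plane_diag _ _ _ Hm12 Hm23 _ (gradF_neq0 _ _ _ _ Hon)).
    unfold gradF; coords. split; [unfold Rdiv; ring | exact Hrel].
Qed.

Lemma umbilic_monge_chart (X Z : R) :
  X ^ 2 = umbilic_x2 A B C -> Z ^ 2 = umbilic_z2 A B C ->
  exists k b : R, k <> 0 /\ b <> 0 /\ monge_chart A B C (mkV X 0 Z) k (3 * b) b 0.
Proof.
  intros HX HZ.
  destruct (proj2 (umbilic_coords_iff X Z) (conj HX HZ)) as [Hon Hrel].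
  pose proof umbilic_x2_pos; pose proof umbilic_z2_pos.
  set (g1 := X / A ^ 2). set (g3 := Z / C ^ 2).
  assert (Hg1 : g1 <> 0) by (apply Rdiv_neq_0; [intros ->; nra | apply pow_nonzero; lra]).
  assert (Hg3 : g3 <> 0) by (apply Rdiv_neq_0; [intros ->; nra | apply pow_nonzero; lra]).
  pose proof (pow2_gt_0 g1 Hg1); pose proof (pow2_gt_0 g3 Hg3).
  set (G := sqrt (g1 ^ 2 + g3 ^ 2)).
  assert (HG : 0 < G) by (apply sqrt_lt_R0; lra).
  assert (HG2 : G ^ 2 = g1 ^ 2 + g3 ^ 2) by (apply pow2_sqrt; lra).
  set (u1 := g1 / G). set (u3 := g3 / G).
  set (P := u1 * u3 * (/ A ^ 2 - / C ^ 2)).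
  assert (HP : P <> 0).
  { assert (/ A ^ 2 < / C ^ 2) by (apply Rinv_pow2_lt; lra).
    unfold P, u1, u3. apply Rmult_integral_contrapositive_currified; [|lra].
    apply Rmult_integral_contrapositive_currified; apply Rdiv_neq_0; lra. }
  assert (HL : 0 < / B ^ 2) by (apply Rinv_0_lt_compat, pow_lt; lra).
  exists (- (/ B ^ 2 / G)), (/ B ^ 2 * P / G ^ 2).
  split; [|split].
  - apply Ropp_neq_0_compat, Rdiv_neq_0; lra.
  - apply Rdiv_neq_0; [apply Rmult_integral_contrapositive_currified|]; nra.
  - apply (monge_chart_of_quadratic (u1 ^ 2 / A ^ 2 + u3 ^ 2 / C ^ 2))
      with (e1 := mkV u3 0 (- u1)) (e2 := mkV 0 1 0) (n := mkV u1 0 u3);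
      try assumption.
    + pose proof (pow2_ge_0 u1); pose proof (pow2_ge_0 u3).
      apply Rplus_le_le_0_compat; apply Rle_mult_inv_pos; nra.
    + unfold orthonormal3, dot, u1, u3; coords.
      repeat split; field_simplify; try rewrite HG2; try field; lra.
    + intros x y t. apply ellF_adapted_frame.
      * exact Hon.
      * unfold u1, u3; fold g1 g3; field; lra.
      * unfold u1, u3; fold g1 g3. apply (Rmult_eq_reg_r G); [|lra].
        field_simplify; [rewrite HG2; field|]; lra.
      * (* the umbilic relation: e1 and e_y have the same normal curvature *)
        assert (Hcurv : g3 ^ 2 / A ^ 2 + g1 ^ 2 / C ^ 2 = (g1 ^ 2 + g3 ^ 2) / B ^ 2).
        { replace ((2 * Z / C ^ 2) ^ 2) with (4 * g3 ^ 2) in Hrel by (unfold g3, Rdiv; ring).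
          replace ((2 * X / A ^ 2) ^ 2) with (4 * g1 ^ 2) in Hrel by (unfold g1, Rdiv; ring).
          unfold Rdiv; lra. }
        unfold u1, u3. rewrite <- HG2 in Hcurv.
        replace ((g3 / G) ^ 2 / A ^ 2 + (g1 / G) ^ 2 / C ^ 2)
          with ((g3 ^ 2 / A ^ 2 + g1 ^ 2 / C ^ 2) / G ^ 2) by (field; lra).
        rewrite Hcurv. field. lra.
Qed.

Lemma umbilic_types (p : V3) :
  umbilic A B C p -> vy p = 0 /\ type_G1 A B C p /\ type_D1 A B C p.
Proof.
  rewrite umbilic_iff. destruct p as [[X Y] Z]; coords. intros (-> & HX & HZ).
  destruct (umbilic_monge_chart X Z HX HZ) as (k & b & Hk & Hb & Hchart).
  split; [reflexivity|]. exact (types_of_monge_chart _ _ _ _ k b Hk Hb Hchart).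
Qed.

End Ellipsoid.

Lemma pow2_eq_cases (x y : R) : x ^ 2 = y ^ 2 -> x = y \/ x = - y.
Proof. rewrite <- !Rsqr_pow2; apply Rsqr_eq. Qed.

Theorem proposition7 (a b c : R) (hab : a > b) (hbc : b > c) (hc : c > 0) :
  exists p1 p2 p3 p4 : V3,
    NoDup (p1 :: p2 :: p3 :: p4 :: nil) /\
    (forall p : V3, umbilic a b c p <-> In p (p1 :: p2 :: p3 :: p4 :: nil)) /\
    Forall (fun p => vy p = 0 /\ type_G1 a b c p /\ type_D1 a b c p)
      (p1 :: p2 :: p3 :: p4 :: nil).
Proof.
  pose proof (umbilic_x2_pos a b c hab hbc hc) as HU.
  pose proof (umbilic_z2_pos a b c hab hbc hc) as HW.
  set (x0 := sqrt (umbilic_x2 a b c)). set (z0 := sqrt (umbilic_z2 a b c)).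
  assert (hx : 0 < x0) by (apply sqrt_lt_R0; lra).
  assert (hz : 0 < z0) by (apply sqrt_lt_R0; lra).
  assert (Hx : umbilic_x2 a b c = x0 ^ 2) by (symmetry; apply pow2_sqrt; lra).
  assert (Hz : umbilic_z2 a b c = z0 ^ 2) by (symmetry; apply pow2_sqrt; lra).
  exists (mkV x0 0 z0), (mkV x0 0 (- z0)), (mkV (- x0) 0 z0), (mkV (- x0) 0 (- z0)).
  assert (Humb : forall p, umbilic a b c p <->
            In p (mkV x0 0 z0 :: mkV x0 0 (- z0) :: mkV (- x0) 0 z0 :: mkV (- x0) 0 (- z0) :: nil)).
  { intros p. rewrite (umbilic_iff a b c hab hbc hc), Hx, Hz.
    destruct p as [[X Y] Z]; simpl; coords. split.
    - intros (-> & [-> | ->]%pow2_eq_cases & [-> | ->]%pow2_eq_cases); tauto.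
    - intros [E | [E | [E | [E | []]]]]; injection E as <- <- <-; repeat split; ring. }
  split; [|split; [exact Humb|]].
  - repeat constructor; simpl; intro H;
      repeat (destruct H as [H | H]; [injection H; intros; lra|]); exact H.
  - apply Forall_forall. intros p Hp.
    apply (umbilic_types a b c hab hbc hc), Humb, Hp.
Qed.
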